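(* Let $K$ be a spherically complete valued field, $d\ge1$, and $C\subseteq K^d$ an $\mathcal{O}$-submodule. Then there exist a complete flag of $K$-linear subspaces $\{0\}\subsetneq F_1\subsetneq F_2\subsetneq\dots\subsetneq F_d=K^d$ (so $\dim F_i=i$) and nonempty upwards closed subsets $\Delta_1\supseteq\Delta_2\supseteq\dots\supseteq\Delta_d$ of $\Gamma\cup\{\infty\}$ such that $$C=\{v_1+\dots+v_d:\ v_i\in F_i,\ \nu_{K^d}(v_i)\in\Delta_i \text{ for all } i\}.$$
   Context: $K$ is a field with valuation $\nu:K\to\Gamma\cup\{\infty\}$ ($\Gamma$ an ordered abelian group, $\infty$ above all of $\Gamma$), valuation ring $\mathcal{O}=\{x:\nu(x)\ge0\}$. On $K^d$, $\nu_{K^d}(x_1,\dots,x_d)=\min_i\nu(x_i)$. A ball in $K$ is $\{x:\nu(x-c)\ge r\}$ or $\{x:\nu(x-c)>r\}$ ($c\in K$, $r\in\Gamma$); $K$ is spherically complete if every nested (totally ordered by inclusion) family of balls has nonempty intersection. A subset $\Delta\subseteq\Gamma\cup\{\infty\}$ is upwards closed if $\gamma\in\Delta$, $\delta\ge\gamma$ imply $\delta\in\Delta$. *)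

From HB Require Import structures.
From mathcomp Require Import all_boot all_order all_algebra.
Set Implicit Arguments. Unset Strict Implicit. Unset Printing Implicit Defensive.
Import GRing.Theory.
Local Open Scope ring_scope.

Section Valued.
Variable G : zmodType.
Variable leG : rel G.

Definition ordered_abelian_group : Prop :=
  [/\ (forall a, leG a a),
      (forall a b, leG a b -> leG b a -> a = b),
      (forall a b c, leG a b -> leG b c -> leG a c),
      (forall a b, leG a b || leG b a)
    & (forall a b c, leG a b -> leG (a + c) (b + c))].

(* Gamma u {oo} is represented by option G, with None = oo (above all of Gamma) *)
Definition leE (x y : option G) : bool :=
  match x, y with
  | _, None => true
  | None, Some _ => false
  | Some a, Some b => leG a b
  end.
Definition ltE (x y : option G) : bool := leE x y && ~~ leE y x.
Definition addE (x y : option G) : option G :=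
  match x, y with Some a, Some b => Some (a + b) | _, _ => None end.
Definition minE (x y : option G) : option G := if leE x y then x else y.

Variable K : fieldType.
Variable nu : K -> option G.

Definition is_valuation : Prop :=
  [/\ (forall x, nu x = None <-> x = 0),
      (forall x y, nu (x * y) = addE (nu x) (nu y))
    & (forall x y, leE (minE (nu x) (nu y)) (nu (x + y)))].

Definition in_O (a : K) : bool := leE (Some 0) (nu a).

Definition is_ball (B : K -> Prop) : Prop :=
  exists (c : K) (r : G),
    (forall x, B x <-> leE (Some r) (nu (x - c))) \/
    (forall x, B x <-> ltE (Some r) (nu (x - c))).

Definition spherically_complete : Prop :=
  forall S : (K -> Prop) -> Prop,
    (forall B, S B -> is_ball B) ->
    (forall B1 B2, S B1 -> S B2 ->
        (forall x, B1 x -> B2 x) \/ (forall x, B2 x -> B1 x)) ->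
    exists x, forall B, S B -> B x.

Definition nu_vec (d : nat) (v : 'rV[K]_d) : option G :=
  foldr minE None [seq nu (v ord0 i) | i <- enum 'I_d].

Definition is_O_submodule (d : nat) (C : 'rV[K]_d -> Prop) : Prop :=
  [/\ C 0,
      (forall x y, C x -> C y -> C (x + y))
    & (forall a x, in_O a -> C x -> C (a *: x))].

Definition upwards_closed (D : option G -> Prop) : Prop :=
  forall g h, D g -> leE g h -> D h.
End Valued.

From HB Require Import structures.
From mathcomp Require Import all_boot all_order all_algebra.
From mathcomp Require Import ring.
From Stdlib Require Import Classical.
Set Implicit Arguments. Unset Strict Implicit. Unset Printing Implicit Defensive.
Import GRing.Theory.
Local Open Scope ring_scope.

(* (1) Spherical completeness, stated for balls, extends to every nested
       family of nonempty O-convex sets (closed under x + a (y - z), a in O):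
       first in K, where each member contains a ball containing a smaller
       member, then in K^d, fixing one coordinate at a time.
   (2) For C supported on a set J of coordinates, some coordinate k is a
       pivot (a coordinate of minimal valuation) for vectors of C of
       arbitrarily small valuation; (1) applied to the sets
       {u | u_k = 1, u integral, c_k u in C} gives a direction u such that
       lambda u is in C whenever nu(lambda) is a value of C.
   (3) By induction on |J|: decompose C' = C meet {x_k = 0}, supported in
       J \ k, add the line <u> to every subspace and put the values of C in
       front.  The theorem is the case where J contains every coordinate. *)

Lemma coinitial_member (T : Type) (I : eqType) (R : rel T) (V : I -> T -> Prop)
    (s : seq I) :
  (forall x y, R x y || R y x) -> (forall x y z, R x y -> R y z -> R x z) ->
  (exists k w, k \in s /\ V k w) ->
  exists2 k, k \in s & forall l w, l \in s -> V l w -> exists2 v, V k v & R v w.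
Proof.
move=> tot tr; elim: s => [|a s IH]; first by case=> k [w []].
move=> _; have refl x : R x x by have := tot x x; rewrite orbb.
case: (classic (exists k w, k \in s /\ V k w)) => [ne|empty]; last first.
  exists a; first exact: mem_head.
  move=> l w; rewrite in_cons => /orP [/eqP -> hw|ls hw]; first by exists w.
  by exfalso; apply: empty; exists l, w.
have [k ks mk] := IH ne.
case: (classic (forall w, V a w -> exists2 v, V k v & R v w)) => [ha|].
  exists k; first by rewrite in_cons ks orbT.
  by move=> l w; rewrite in_cons => /orP [/eqP ->|ls]; [apply: ha | apply: mk].
move=> /not_all_ex_not [w0 not_lb]; have [hw0 nb] := imply_to_and _ _ not_lb.
exists a; first exact: mem_head.
move=> l w; rewrite in_cons => /orP [/eqP -> hw|ls hw]; first by exists w.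
have [v hv hvw] := mk l w ls hw; exists w0 => //; apply: (tr _ _ _ _ hvw).
by case/orP: (tot w0 v) => // hv0; exfalso; apply: nb; exists v.
Qed.

Section Valuation.
Variables (K : fieldType) (G : zmodType) (leG : rel G).
Hypothesis HG : ordered_abelian_group leG.
Variable nu : K -> option G.
Hypothesis Hnu : is_valuation leG nu.

Local Notation le := (leE leG).

Lemma leG_anti a b : leG a b -> leG b a -> a = b.
Proof. by case: HG => _ h _ _ _; apply: h. Qed.
Lemma leG_total a b : leG a b || leG b a. Proof. by case: HG. Qed.
Lemma leG_add a b c : leG a b -> leG (a + c) (b + c).
Proof. by case: HG => _ _ _ _ h; apply: h. Qed.

Lemma leE_refl x : le x x. Proof. by case: x => //= a; case: HG. Qed.
Lemma leE_trans x y z : le x y -> le y z -> le x z.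
Proof. by case: x; case: y; case: z => //= a b c; case: HG => _ _ h _ _; apply: h. Qed.
Lemma leE_total x y : le x y || le y x.
Proof. by case: x; case: y => //= a b; apply: leG_total. Qed.
Lemma leE_None x : le x None. Proof. by case: x. Qed.
Lemma leE_Nonel x : le None x -> x = None. Proof. by case: x. Qed.
Lemma leE_nle x y : ~~ le x y -> le y x.
Proof. by move=> h; move: (leE_total x y); rewrite (negbTE h). Qed.

Lemma leE_min g x y : le g (minE leG x y) = le g x && le g y.
Proof.
rewrite /minE; case: ifP => hxy; apply/idP/andP => [hg|[]//].
  by split=> //; apply: leE_trans hxy.
by split=> //; apply: leE_trans hg (leE_nle (negbT hxy)).
Qed.

Lemma leE_addr x y : le (Some 0) y -> le x (addE x y).
Proof. by case: x; case: y => //= t s h; move: (leG_add s h); rewrite add0r addrC. Qed.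

Lemma nu_eq0 x : nu x = None <-> x = 0. Proof. by case: Hnu. Qed.
Lemma nu0 : nu 0 = None. Proof. exact/nu_eq0. Qed.
Lemma nuM x y : nu (x * y) = addE (nu x) (nu y). Proof. by case: Hnu. Qed.

Lemma nu_ultra g x y : le g (nu x) -> le g (nu y) -> le g (nu (x + y)).
Proof.
by case: Hnu => _ _ hD hx hy; apply: leE_trans (hD x y); rewrite leE_min hx hy.
Qed.

Lemma nu_Some x : x != 0 -> exists s, nu x = Some s.
Proof.
move=> x0; case e: (nu x) => [s|]; first by exists s.
by move/nu_eq0: e x0 => ->; rewrite eqxx.
Qed.

Lemma nu1 : nu 1 = Some 0.
Proof.
have [s hs] := nu_Some (oner_neq0 K).
have := nuM 1 1; rewrite mulr1 hs /= => -[] e.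
by congr Some; apply: (@addrI _ s); rewrite addr0 -e.
Qed.

(* nu(-1) = 0: it is an element s with s + s = 0 in an ordered group. *)
Lemma nuN1 : nu (-1) = Some 0.
Proof.
have n1 : (-1 : K) != 0 by rewrite oppr_eq0 oner_neq0.
have [s hs] := nu_Some n1.
have := nuM (-1) (-1); rewrite mulrNN mulr1 hs nu1 /= => -[] e.
congr Some; case/orP: (leG_total s 0) => h; have := leG_add s h;
  rewrite -e add0r => h2; exact: leG_anti.
Qed.

Lemma nuN x : nu (- x) = nu x.
Proof. by rewrite -mulN1r nuM nuN1; case: (nu x) => //= a; rewrite add0r. Qed.

Lemma nuV x s : nu x = Some s -> nu x^-1 = Some (- s).
Proof.
move=> hs; have x0 : x != 0 by apply: contraPneq hs => ->; rewrite nu0.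
have := nuM x x^-1; rewrite mulfV // nu1 hs.
by case: (nu x^-1) => //= t [] e; congr Some; apply: (@addrI _ s); rewrite -e subrr.
Qed.

Lemma inO_div a b : b != 0 -> le (nu b) (nu a) -> in_O leG nu (a / b).
Proof.
move=> b0; have [s hs] := nu_Some b0; rewrite /in_O nuM (nuV hs) hs.
by case: (nu a) => //= t h; move: (leG_add (- s) h); rewrite subrr.
Qed.

Lemma inO_le a x g : in_O leG nu a -> le g (nu x) -> le g (nu (a * x)).
Proof. by move=> ha hx; rewrite mulrC nuM; apply: leE_trans hx (leE_addr _ ha). Qed.

Lemma inO_N1 : in_O leG nu (-1). Proof. by rewrite /in_O nuN1 leE_refl. Qed.

(* A set X in a K-vector space is O-convex if it is closed under
   x + a (y - z) for x, y, z in X and a in O; cosets of O-submodules, and balls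
   of K, are O-convex. *)
Definition O_convex (V : lmodType K) (X : V -> Prop) : Prop :=
  forall x y z a, X x -> X y -> X z -> in_O leG nu a -> X (x + a *: (y - z)).

Definition nested (I T : Type) (X : I -> T -> Prop) : Prop :=
  forall i j, (forall x, X i x -> X j x) \/ (forall x, X j x -> X i x).

Definition O_chain (I : Type) (V : lmodType K) (X : I -> V -> Prop) : Prop :=
  [/\ nested X, forall i, exists x, X i x & forall i, O_convex (X i)].

Definition cball (c : K) (r : G) (x : K) : Prop := le (Some r) (nu (x - c)).

Lemma O_convex_ball (X : K^o -> Prop) x y z :
  O_convex X -> X x -> X y -> y != x -> le (nu (y - x)) (nu (z - x)) -> X z.
Proof.
move=> cX hx hy yx hz; rewrite -subr_eq0 in yx.
have -> : z = x + ((z - x) / (y - x)) *: (y - x) by rewrite /GRing.scale /= divfK ?subrKC.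
by apply: cX => //; apply: inO_div.
Qed.

Lemma cball_sub c1 c2 r1 r2 p x :
  leG r1 r2 -> cball c1 r1 p -> cball c2 r2 p -> cball c2 r2 x -> cball c1 r1 x.
Proof.
rewrite /cball => hr h1 h2 h3.
have w t : le (Some r2) t -> le (Some r1) t by apply: leE_trans.
have -> : x - c1 = (x - c2) + ((c2 - p) + (p - c1)) by ring.
by apply: nu_ultra (w _ h3) (nu_ultra _ h1); rewrite -nuN opprB; apply: w.
Qed.

Hypothesis Hsc : spherically_complete leG nu.

(* Spherical completeness extends from balls to O-convex sets: if no member
   of the chain is least, every member contains a closed ball which in turn
   contains a smaller member; these balls form a nested family. *)
Lemma O_chain_K (I : Type) (X : I -> K^o -> Prop) :
  O_chain X -> exists a, forall i, X i a.
Proof.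
case=> nX neX cX.
case: (classic (exists i0, forall i x, X i0 x -> X i x)) => [[i0 h0]|nomin].
  by have [x hx] := neX i0; exists x => i; apply: h0.
have strict i : exists j y, (forall x, X j x -> X i x) /\ X i y /\ ~ X j y.
  apply: NNPP => hn; apply: nomin; exists i => j x hx; apply: NNPP => hjx.
  by apply: hn; exists j, x; case: (nX i j) => h; [exfalso; apply: hjx; apply: h|].
pose S B := exists c r j, B = cball c r /\ forall x, X j x -> cball c r x.
have [a ha] : exists a, forall B, S B -> B a.
  apply: Hsc => [B [c [r [j [-> _]]]]|B1 B2 [c1 [r1 [j1 [-> s1]]]] [c2 [r2 [j2 [-> s2]]]]].
    by exists c, r; left.
  have [p [p1 p2]] : exists p, cball c1 r1 p /\ cball c2 r2 p.
    case: (nX j1 j2) => h.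
      by have [p hp] := neX j1; exists p; split; [apply: s1 | apply: s2; apply: h].
    by have [p hp] := neX j2; exists p; split; [apply: s1; apply: h | apply: s2].
  case/orP: (leG_total r1 r2) => hr; [right|left] => x.
    exact: cball_sub hr p1 p2.
  exact: cball_sub hr p2 p1.
exists a => i; have [j [y [ji [hy nhy]]]] := strict i; have [x hx] := neX j.
have yx : y != x by apply: contra_notN nhy => /eqP ->.
have [r hr] : exists r, nu (y - x) = Some r by apply: nu_Some; rewrite subr_eq0.
have sub_ball z : X j z -> cball x r z.
  move=> hz; apply: NNPP => /negP nb; apply: nhy.
  have zx : z != x by apply: contraNneq nb => ->; rewrite /cball subrr nu0.
  by apply: (O_convex_ball (cX j) hx hz zx); rewrite hr; apply: leE_nle.
have hxi := ji x hx.
have := ha (cball x r) (ex_intro _ x (ex_intro _ r (ex_intro _ j (conj erefl sub_ball)))).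
by rewrite /cball -hr; apply: O_convex_ball (cX i) hxi hy yx.
Qed.

Section Vectors.
Variable d : nat.

(* A chain of O-convex sets of K^d can be cut down to a given value of the
   j-th coordinate without losing nonemptiness (apply O_chain_K to the
   chain of j-th coordinate projections). *)
Lemma O_chain_fix_coord (I : Type) (X : I -> 'rV[K]_d -> Prop) j :
  O_chain X -> exists a, O_chain (fun i x => X i x /\ x 0 j = a).
Proof.
case=> nX neX cX.
have [a ha] : exists a : K^o, forall i, exists x, X i x /\ x 0 j = a.
  apply: (O_chain_K (X := fun i (b : K^o) => exists x, X i x /\ x 0 j = b)); split.
  - move=> i i'; case: (nX i i') => h; [left|right] => b [x [hx e]];
      by exists x; split => //; apply: h.
  - by move=> i; have [x hx] := neX i; exists (x 0 j), x.
  - move=> i b b' b'' c [x [hx <-]] [y [hy <-]] [z [hz <-]] hc.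
    by exists (x + c *: (y - z)); split; [apply: cX | rewrite !mxE].
exists a; split.
- by move=> i i'; case: (nX i i') => h; [left|right] => x [hx e]; split => //; apply: h.
- exact: ha.
- move=> i x y z c [hx ex] [hy ey] [hz ez] hc; split; first exact: cX.
  by rewrite !mxE ex ey ez subrr mulr0 addr0.
Qed.

(* K^d inherits from K the intersection property of O-chains: fix the
   coordinates one at a time. *)
Lemma O_chain_rV (I : Type) (X : I -> 'rV[K]_d -> Prop) :
  O_chain X -> exists u, forall i, X i u.
Proof.
suff agree (s : seq 'I_d) : forall Y : I -> 'rV[K]_d -> Prop, O_chain Y ->
    exists p : 'rV[K]_d, forall i, exists x, Y i x /\ {in s, forall j, x 0 j = p 0 j}.
  move=> cX; have [p hp] := agree (enum 'I_d) X cX; exists p => i.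
  have [x [hx e]] := hp i; suff -> : p = x by [].
  by apply/rowP => j; rewrite e ?mem_enum.
elim: s => [|j s IH] Y cY.
  by case: cY => _ neY _; exists 0 => i; have [x hx] := neY i; exists x.
have [a ca] := O_chain_fix_coord j cY; have [p hp] := IH _ ca.
exists (\row_l if l == j then a else p 0 l) => i.
have [x [[hx xj] e]] := hp i; exists x; split => // l.
rewrite in_cons mxE => /orP [/eqP ->|ls]; first by rewrite eqxx.
by case: eqP => [->|_]; [apply: xj | apply: e].
Qed.

Local Notation nuv := (nu_vec leG nu).

Lemma foldr_minE_ge g s : le g (foldr (minE leG) None s) = all (le g) s.
Proof. by elim: s => [|a s IH] /=; [apply: leE_None | rewrite leE_min IH]. Qed.

Lemma nu_vec_ge g (v : 'rV[K]_d) : le g (nuv v) <-> forall j, le g (nu (v 0 j)).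
Proof.
rewrite /nu_vec foldr_minE_ge all_map; split => [/allP h j|h].
  by apply: h; rewrite mem_enum.
by apply/allP => j _; apply: h.
Qed.

Lemma nu_vec_le (v : 'rV[K]_d) j : le (nuv v) (nu (v 0 j)).
Proof. exact/(nu_vec_ge _ v).1/leE_refl. Qed.

Lemma nu_vec0 : nuv (0 : 'rV[K]_d) = None.
Proof. by apply/leE_Nonel/nu_vec_ge => j; rewrite mxE nu0. Qed.

Definition integral_vec (u : 'rV[K]_d) : Prop := forall j, le (Some 0) (nu (u 0 j)).

Lemma nu_vec_scale_ge a (u : 'rV[K]_d) : integral_vec u -> le (nu a) (nuv (a *: u)).
Proof. by move=> hu; apply/nu_vec_ge => j; rewrite mxE nuM; apply: leE_addr. Qed.

Lemma nu_vec_sub_ge g (x u : 'rV[K]_d) a :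
  integral_vec u -> le g (nuv x) -> le g (nu a) -> le g (nuv (x - a *: u)).
Proof.
move=> hu hx ha; apply/nu_vec_ge => j; rewrite !mxE.
apply: nu_ultra; first exact/(nu_vec_ge _ x).1.
by rewrite nuN nuM; apply: leE_trans ha (leE_addr _ (hu j)).
Qed.

Definition pivot (c : 'rV[K]_d) (k : 'I_d) : Prop :=
  c 0 k != 0 /\ forall j, le (nu (c 0 k)) (nu (c 0 j)).

Lemma pivot_exists (v : 'rV[K]_d) : v != 0 -> exists k, pivot v k /\ nuv v = nu (v 0 k).
Proof.
move=> v0; have nv : nuv v <> None.
  move=> e; apply/negP: v0; apply/negPn/eqP/rowP => j; rewrite mxE.
  by apply/nu_eq0/leE_Nonel; rewrite -e nu_vec_le.
have [e|] : nuv v = None \/ nuv v \in [seq nu (v 0 i) | i <- enum 'I_d].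
- rewrite /nu_vec; elim: [seq _ | _ <- _] => [|a s IH] /=; first by left.
  rewrite /minE; case: ifP => _; first by right; rewrite mem_head.
  by case: IH => [->|h]; [left | right; rewrite in_cons h orbT].
- by case: nv.
case/mapP => k _ ek; exists k; split => //; split => [|j]; last by rewrite -ek nu_vec_le.
by apply: contra_notN nv => /eqP vk; rewrite ek vk nu0.
Qed.

Lemma pivot_coordinate (C : 'rV[K]_d -> Prop) :
  (exists2 c0, C c0 & c0 != 0) ->
  exists k, forall c, C c -> exists c', [/\ C c', pivot c' k & le (nu (c' 0 k)) (nuv c)].
Proof.
move=> [c0 hc0 c00].
pose V k w := exists c', [/\ C c', pivot c' k & w = nu (c' 0 k)].
have value_in_V c : C c -> c != 0 -> exists j, V j (nuv c).
  by move=> hc c0'; have [j [pj ej]] := pivot_exists c0'; exists j, c.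
have [j0 Vj0] := value_in_V c0 hc0 c00.
have [k _ mk] := coinitial_member (V := V) (s := enum 'I_d) leE_total leE_trans
  (ex_intro _ j0 (ex_intro _ _ (conj (mem_enum _ j0) Vj0))).
exists k => c hc.
have [j [w [Vjw hw]]] : exists j w, V j w /\ le w (nuv c).
  case: (eqVneq c 0) => [->|c0']; first by exists j0, (nuv c0); rewrite nu_vec0 leE_None.
  by have [j Vj] := value_in_V c hc c0'; exists j, (nuv c); rewrite leE_refl.
have [_ [c' [hc' pc' ->]] hv] := mk j w (mem_enum _ j) Vjw.
by exists c'; split => //; apply: leE_trans hv hw.
Qed.

Definition supported (J : {set 'I_d}) (x : 'rV[K]_d) : Prop :=
  forall j, j \notin J -> x 0 j = 0.

(* The upward closure in Gamma u {oo} of the values of nu_{K^d} on C;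
   it is the first set Delta_1 of the decomposition of C. *)
Definition value_set (C : 'rV[K]_d -> Prop) (g : option G) : Prop :=
  exists2 c, C c & le (nuv c) g.

Section Submodule.
Variable C : 'rV[K]_d -> Prop.
Hypothesis HC : is_O_submodule leG nu C.

Lemma subC0 : C 0. Proof. by case: HC. Qed.
Lemma subCD x y : C x -> C y -> C (x + y). Proof. by case: HC => _ h _; apply: h. Qed.
Lemma subCZ a x : in_O leG nu a -> C x -> C (a *: x).
Proof. by case: HC => _ _ h; apply: h. Qed.
Lemma subCB x y : C x -> C y -> C (x - y).
Proof. by move=> hx hy; rewrite -scaleN1r; apply/subCD/subCZ/hy => //; apply: inO_N1. Qed.

Lemma subC_rescale a b w :
  a != 0 -> le (nu a) (nu b) -> C (a *: w) -> C (b *: w).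
Proof. by move=> a0 hab hw; rewrite -[b](divfK a0) -scalerA; apply: subCZ => //; apply: inO_div. Qed.

Lemma value_set_up : upwards_closed leG (value_set C).
Proof. by move=> g h [c hc hcg] hgh; exists c => //; apply: leE_trans hgh. Qed.

Lemma value_set_oo : value_set C None.
Proof. by exists 0; [apply: subC0 | apply: leE_None]. Qed.

Variable J : {set 'I_d}.
Hypothesis suppC : forall c, C c -> supported J c.

Lemma pivot_line_trivial : (forall c, C c -> c = 0) -> J != set0 ->
  exists k u, [/\ k \in J, supported J u, u 0 k = 1, integral_vec u
                & forall lam, value_set C (nu lam) -> C (lam *: u)].
Proof.
move=> C0 /set0Pn [k kJ]; exists k, (\row_j if j == k then 1 else 0); split => //.
- by move=> j jJ; rewrite mxE; case: eqP => // jk; rewrite jk kJ in jJ.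
- by rewrite mxE eqxx.
- by move=> j; rewrite mxE; case: eqP => _; [rewrite nu1 leE_refl | rewrite nu0].
move=> lam [c /C0 -> /leE_trans]; rewrite nu_vec0 => /(_ _ (leE_refl _)).
by move/leE_Nonel/nu_eq0 ->; rewrite scale0r; apply: subC0.
Qed.

(* The nontrivial case: for a pivot k as in pivot_coordinate, the vectors c
   of C pivoting at k index the O-chain of sets
   {u | u_k = 1, u integral, c_k u in C}, ordered by nu(c_k); a common point
   u is the wanted direction, and it is supported in J because c_k u is. *)
Lemma pivot_line_nontrivial : (exists2 c0, C c0 & c0 != 0) ->
  exists k u, [/\ k \in J, supported J u, u 0 k = 1, integral_vec u
                & forall lam, value_set C (nu lam) -> C (lam *: u)].
Proof.
move=> [c0 hc0 c00]; have [k Pk] := pivot_coordinate (ex_intro2 _ _ c0 hc0 c00).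
pose I := {c : 'rV[K]_d | C c /\ pivot c k}.
pose X (i : I) (u : 'rV[K]_d) := [/\ u 0 k = 1, C ((sval i) 0 k *: u) & integral_vec u].
have [u hu] : exists u, forall i, X i u.
  apply: O_chain_rV; split.
  - move=> [c [hc [ck pc]]] [c' [hc' [ck' pc']]] /=.
    have [h|h] := orP (leE_total (nu (c 0 k)) (nu (c' 0 k))); [left|right] => w [w1 w2 w3];
      by split => //; apply: subC_rescale w2.
  - move=> [c [hc [ck pc]]] /=; exists ((c 0 k)^-1 *: c); split.
    + by rewrite mxE mulVf.
    + by rewrite scalerA mulfV // scale1r.
    + by move=> j; rewrite mxE mulrC; apply: inO_div.
  - move=> [c hc] x y z a [x1 x2 x3] [y1 y2 y3] [z1 z2 z3] ha /=; split.
    + by rewrite !mxE x1 y1 z1 subrr mulr0 addr0.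
    + rewrite scalerDr scalerA mulrC -scalerA scalerBr.
      by apply/subCD/subCZ/subCB.
    + move=> j; rewrite !mxE; apply: nu_ultra => //; apply: inO_le => //.
      by apply: nu_ultra => //; rewrite nuN.
have [c1 [hc1 pc1 _]] := Pk c0 hc0; have [uk u1c1 uO] := hu (exist _ c1 (conj hc1 pc1)).
have supp_u : supported J u.
  move=> j jJ; move: (suppC u1c1 jJ); rewrite mxE => /eqP.
  by rewrite mulf_eq0 (negbTE pc1.1) => /eqP.
exists k, u; split => //.
  by apply: contraT => kJ; move: (supp_u k kJ); rewrite uk => /eqP; rewrite oner_eq0.
move=> lam [c hc hle]; have [c2 [hc2 pc2 h2]] := Pk c hc.
have [_ u1c2 _] := hu (exist _ c2 (conj hc2 pc2)).
by apply: subC_rescale pc2.1 _ u1c2; apply: leE_trans h2 hle.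
Qed.

Lemma pivot_line : J != set0 ->
  exists k u, [/\ k \in J, supported J u, u 0 k = 1, integral_vec u
                & forall lam, value_set C (nu lam) -> C (lam *: u)].
Proof.
move=> J0; case: (classic (exists2 c0, C c0 & c0 != 0)) => [|C0].
  exact: pivot_line_nontrivial.
apply: pivot_line_trivial => // c hc; apply/eqP/negPn/negP => c0.
by apply: C0; exists c.
Qed.

End Submodule.

Record flag_decomposition (J : {set 'I_d}) (C : 'rV[K]_d -> Prop) (n : nat)
    (F : nat -> {vspace 'rV[K]_d}) (D : nat -> option G -> Prop) : Prop := {
  fd_dim : forall i, (i < n)%N -> \dim (F i) = i.+1;
  fd_incr : forall i j, (i < j)%N -> (j < n)%N -> (F i <= F j)%VS;
  fd_supp : forall i x, (i < n)%N -> x \in F i -> supported J x;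
  fd_nonempty : forall i, (i < n)%N -> exists g, D i g;
  fd_upward : forall i, (i < n)%N -> upwards_closed leG (D i);
  fd_decr : forall i j g, (i <= j)%N -> (j < n)%N -> D j g -> D i g;
  fd_values : forall i g, (i < n)%N -> D i g -> value_set C g;
  fd_sound : forall i x, (i < n)%N -> x \in F i -> D i (nuv x) -> C x;
  fd_complete : forall x, C x -> exists v : nat -> 'rV[K]_d,
    (forall i, (i < n)%N -> v i \in F i /\ D i (nuv (v i))) /\ x = \sum_(i < n) v i
}.

Lemma flag_decomposition0 (C : 'rV[K]_d -> Prop) :
  (forall c, C c -> supported set0 c) ->
  flag_decomposition set0 C 0 (fun _ => 0%VS) (fun _ _ => True).
Proof.
move=> supp0; split => // x hx; exists (fun _ => 0); split => //.
by rewrite big_ord0; apply/rowP => j; rewrite mxE; apply: supp0; rewrite ?inE.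
Qed.

(* The induction step: given the pivot line <[u]> of C at the coordinate k,
   a decomposition of C' = C meet {x_k = 0} (supported in J \ k) extends to
   one of C by adding u to every subspace and putting D_0 = value_set C. *)
Section Step.
Variables (C : 'rV[K]_d -> Prop) (J : {set 'I_d}) (k : 'I_d) (u : 'rV[K]_d).
Hypotheses (HC : is_O_submodule leG nu C) (suppC : forall c, C c -> supported J c).
Hypotheses (uJ : supported J u) (uk : u 0 k = 1) (uO : integral_vec u)
  (uC : forall lam, value_set C (nu lam) -> C (lam *: u)).

Let C' (x : 'rV[K]_d) : Prop := C x /\ x 0 k = 0.

Lemma slice_submodule : is_O_submodule leG nu C'.
Proof.
split.
- by split; [apply: subC0 | rewrite mxE].
- by move=> x y [hx ex] [hy ey]; split; [apply: subCD | rewrite mxE ex ey addr0].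
- by move=> a x ha [hx ex]; split; [apply: subCZ | rewrite mxE ex mulr0].
Qed.

Lemma slice_supp x : C' x -> supported (J :\ k) x.
Proof.
move=> [hx ex] j; rewrite in_setD1 negb_and negbK => /orP [/eqP ->|hj] //.
exact: suppC.
Qed.

Variables (n : nat) (F' : nat -> {vspace 'rV[K]_d}) (D' : nat -> option G -> Prop).
Hypothesis fd' : flag_decomposition (J :\ k) C' n F' D'.

Let F i := if i is i'.+1 then (F' i' + <[u]>)%VS else <[u]>%VS.
Let D i := if i is i'.+1 then D' i' else value_set C.

Lemma line_coord x : x \in <[u]>%VS -> x = x 0 k *: u.
Proof. by move=> /vlineP [l ->]; rewrite mxE uk mulr1. Qed.

Lemma slice_coord i x : (i < n)%N -> x \in F' i -> x 0 k = 0.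
Proof. by move=> hi hx; apply: (fd_supp fd' hi hx); rewrite in_setD1 eqxx. Qed.

Lemma slice_values g i : (i < n)%N -> D' i g -> value_set C g.
Proof. by move=> hi /(fd_values fd' hi) [c [hc _] hcg]; exists c. Qed.

Lemma step_sound i x : (i < n.+1)%N -> x \in F i -> D i (nuv x) -> C x.
Proof.
case: i => [|i] /= hi.
  by move=> /line_coord ex hD; rewrite ex; apply/uC/(value_set_up hD (nu_vec_le x k)).
case/memv_addP => w hw [v hv ex] /= hD.
have [xk ew] : x 0 k = v 0 k /\ w = x - x 0 k *: u.
  have xk : x 0 k = v 0 k by rewrite ex mxE (slice_coord hi hw) add0r.
  by split => //; rewrite xk -(line_coord hv) ex addrK.
rewrite ex; apply: subCD => //.
  have [] : C' w; last by [].
  apply: (fd_sound fd' hi hw); apply: (fd_upward fd' hi hD).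
  by rewrite ew; apply: nu_vec_sub_ge => //; [apply: leE_refl | apply: nu_vec_le].
rewrite (line_coord hv) -xk; apply: uC.
have [c hc hl] := slice_values hi hD.
by exists c => //; apply: leE_trans hl (nu_vec_le _ _).
Qed.

Lemma step_complete x : C x -> exists v : nat -> 'rV[K]_d,
  (forall i, (i < n.+1)%N -> v i \in F i /\ D i (nuv (v i))) /\ x = \sum_(i < n.+1) v i.
Proof.
move=> hx; pose a := x 0 k.
have val_a : value_set C (nu a) by exists x => //; apply: nu_vec_le.
have hw : C' (x - a *: u).
  by split; [apply: subCB => //; apply: uC | rewrite !mxE uk mulr1 subrr].
have [v' [hv' ev']] := fd_complete fd' hw.
exists (fun i => if i is i'.+1 then v' i' else a *: u); split.
  case => [|i] hi /=.
    split; first exact/memvZ/memv_line.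
    by apply: value_set_up val_a _; apply: nu_vec_scale_ge.
  have [h1 h2] := hv' i hi; split => //.
  exact: subvP (addvSl _ _) _ h1.
rewrite big_ord_recl /= (eq_bigr (fun i : 'I_n => v' i)); last by move=> i _; rewrite add0n.
by rewrite -ev' addrC subrK.
Qed.

Lemma flag_decomposition_step : flag_decomposition J C n.+1 F D.
Proof.
have u0 : u != 0 by apply: contra_eq_neq uk => ->; rewrite mxE eq_sym oner_neq0.
split.
- case => [|i] hi /=; first by rewrite dim_vline u0.
  rewrite dimv_disjoint_sum ?dim_vline ?u0 ?(fd_dim fd') ?addn1 //.
  apply/eqP; rewrite -subv0; apply/subvP => x /memv_capP [h1 h2].
  by rewrite memv0 (line_coord h2) (slice_coord hi h1) scale0r.
- case => [|i] [|j] //= hij hj; first exact: addvSr.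
  by apply: addvS => //; apply: (fd_incr fd').
- case => [|i] x /= hi; first by move/line_coord => -> j hj; rewrite mxE (uJ hj) mulr0.
  case/memv_addP => w hw [v hv ->] j hj.
  rewrite mxE (line_coord hv) mxE (uJ hj) mulr0 addr0.
  by apply: (fd_supp fd' hi hw); rewrite in_setD1 (negbTE hj) andbF.
- by case => [|i] hi /=; [exists None; apply: value_set_oo | apply: (fd_nonempty fd')].
- by case => [|i] hi /=; [apply: value_set_up | apply: (fd_upward fd')].
- case => [|i] [|j] g //= hij hj hD; first exact: slice_values hD.
  exact: (fd_decr fd') hD.
- by case => [|i] g //= hi; apply: slice_values.
- exact: step_sound.
- exact: step_complete.
Qed.

End Step.

Lemma flag_decomposition_exists n : forall (J : {set 'I_d}) (C : 'rV[K]_d -> Prop),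
  #|J| = n -> is_O_submodule leG nu C -> (forall c, C c -> supported J c) ->
  exists F D, flag_decomposition J C n F D.
Proof.
elim: n => [|n IH] J C hJ HC suppC.
  move/eqP: hJ; rewrite cards_eq0 => /eqP J0; rewrite J0 in suppC *.
  by exists (fun _ => 0%VS), (fun _ _ => True); apply: flag_decomposition0.
have J0 : J != set0 by rewrite -cards_eq0 hJ.
have [k [u [kJ uJ uk uO uC]]] := pivot_line HC suppC J0.
have hJ' : #|J :\ k| = n by move: hJ; rewrite (cardsD1 k J) kJ add1n => -[].
have [F' [D' fd']] := IH _ _ hJ' (slice_submodule k HC) (slice_supp suppC).
by do 2!eexists; apply: (flag_decomposition_step HC uJ uk uO uC fd').
Qed.

End Vectors.
End Valuation.

Theorem theorem3p6
  (K : fieldType) (G : zmodType) (leG : rel G)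
  (HG : ordered_abelian_group leG)
  (nu : K -> option G) (Hnu : is_valuation leG nu)
  (Hsc : spherically_complete leG nu)
  (d : nat) (hd : (1 <= d)%N)
  (C : 'rV[K]_d -> Prop) (HC : is_O_submodule leG nu C) :
  exists (F : 'I_d -> {vspace 'rV[K]_d}) (D : 'I_d -> option G -> Prop),
    (forall i : 'I_d, \dim (F i) = i.+1) /\
    (forall i j : 'I_d, (i < j)%N -> (F i <= F j)%VS && (F i != F j)) /\
    (forall i : 'I_d, (i.+1 = d)%N -> F i = fullv) /\
    (forall i : 'I_d, exists g, D i g) /\
    (forall i : 'I_d, upwards_closed leG (D i)) /\
    (forall (i j : 'I_d) g, (i <= j)%N -> D j g -> D i g) /\
    (forall x : 'rV[K]_d,
       C x <-> exists v : 'I_d -> 'rV[K]_d,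
                 (forall i, v i \in F i /\ D i (nu_vec leG nu (v i))) /\
                 x = \sum_(i < d) v i).
Proof.
have suppT x : C x -> supported [set: 'I_d] x by move=> _ j; rewrite inE.
have cardT : #|[set: 'I_d]| = d by rewrite cardsT card_ord.
have [F [D fd]] := flag_decomposition_exists HG Hnu Hsc cardT HC suppT.
exists (fun i : 'I_d => F i), (fun i : 'I_d => D i).
split; first by move=> i; apply: (fd_dim fd).
split.
  move=> i j hij; rewrite (fd_incr fd) //=; apply: contraTneq hij => eFij.
  by have := fd_dim fd (ltn_ord i); rewrite eFij (fd_dim fd) // => -[->]; rewrite ltnn.
split.
  move=> i hi; apply/eqP; rewrite eqEdim subvf dimvf (fd_dim fd) // hi.
  by rewrite /= dim_matrix mul1r.
split; first by move=> i; apply: (fd_nonempty fd).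
split; first by move=> i; apply: (fd_upward fd).
split; first by move=> i j g hij; apply: (fd_decr fd).
move=> x; split.
  move/(fd_complete fd) => [v [hv ->]].
  by exists (fun i : 'I_d => v i); split => // i; apply: hv.
move=> [v [hv ->]]; apply: (big_ind C); [exact: subC0 HC | exact: subCD HC |].
by move=> i _; have [h1 h2] := hv i; apply: (fd_sound fd (ltn_ord i) h1 h2).
Qed.
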